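(* In any latin square of even order, the number of transversals is even.
   Context: A latin square of order $n$ is an $n\times n$ array of $n$ symbols in which each symbol occurs exactly once in each row and column. A transversal is a set of $n$ cells, one from each row and one from each column, no two containing the same symbol. *)

From mathcomp Require Import all_boot.
Set Implicit Arguments. Unset Strict Implicit. Unset Printing Implicit Defensive.

(* Since there are exactly n symbols and n cells per row/column, "exactly once"
   is equivalent to injectivity of every row and every column; we state it
   literally as "exactly once". *)
Definition latin_square (n : nat) (L : 'I_n -> 'I_n -> 'I_n) : Prop :=
  (forall (i : 'I_n) (s : 'I_n), #|[set j : 'I_n | L i j == s]| = 1) /\
  (forall (j : 'I_n) (s : 'I_n), #|[set i : 'I_n | L i j == s]| = 1).

Definition transversal (n : nat) (L : 'I_n -> 'I_n -> 'I_n)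
    (T : {set 'I_n * 'I_n}) : bool :=
  [&& #|T| == n,
      [forall i : 'I_n, #|[set c in T | c.1 == i]| == 1],
      [forall j : 'I_n, #|[set c in T | c.2 == j]| == 1] &
      [forall c1 in T, forall c2 in T,
          (L c1.1 c1.2 == L c2.1 c2.2) ==> (c1 == c2)]].

Definition num_transversals (n : nat) (L : 'I_n -> 'I_n -> 'I_n) : nat :=
  #|[set T : {set 'I_n * 'I_n} | transversal L T]|.

From Pilot Require Import Defs.
From mathcomp Require Import all_boot all_algebra all_fingroup.
Set Implicit Arguments. Unset Strict Implicit. Unset Printing Implicit Defensive.

(* The argument is a determinant computation over the field F_2.  A
   transversal of L is the same as a permutation s of the columns for which
   the symbols L i (s i) are pairwise distinct, i.e. whose symbol set
   {L i (s i) | i} is the whole alphabet.  For a set A of symbols let M_A be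
   the 0/1 matrix over F_2 with (i, j) entry [L i j \in A].  Expanding
   det M_A by the Leibniz formula (signs are 1 in characteristic 2) counts
   the permutations whose symbol set is contained in A; summing over all A,
   a permutation is counted 2 ^ (n - #symbols) times, an odd number exactly
   when it is a transversal.  Hence  Sum_A det M_A = #transversals  in F_2.
   On the other hand M_{~A} = M_A + J with J the all-ones matrix, and,
   because every row of L is injective, M_A J = |A| J.  When n is even,
   J ^ 2 = 0 and this forces det (M_A + J) = det M_A, so the terms for A and
   its complement cancel and the sum is 0. *)

Import GRing.Theory.

Lemma latin_row_inj n (L : 'I_n -> 'I_n -> 'I_n) :
  latin_square L -> forall i, injective (L i).
Proof.
move=> [rows _] i j j' eqL.
have /card_le1_eqP eq_in_row : #|[set k | L i k == L i j]| <= 1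
  by rewrite rows.
by apply: eq_in_row; rewrite inE ?eqL.
Qed.

Section PermutationTransversals.
Variables (n : nat) (L : 'I_n -> 'I_n -> 'I_n).

Definition perm_cells (s : 'S_n) : {set 'I_n * 'I_n} := [set (i, s i) | i : 'I_n].
Definition perm_symbols (s : 'S_n) : {set 'I_n} := [set L i (s i) | i : 'I_n].

Lemma perm_cells_inj : injective perm_cells.
Proof.
move=> s s' eq_cells; apply/permP => i.
have : (i, s i) \in perm_cells s' by rewrite -eq_cells imset_f.
by case/imsetP => j _ [-> ->].
Qed.

Lemma card_perm_cells (s : 'S_n) : #|perm_cells s| = n.
Proof. by rewrite card_imset ?cardsT ?card_ord // => i j []. Qed.

Lemma perm_symbolsTP (s : 'S_n) :
  reflect (injective (fun i => L i (s i))) (perm_symbols s == setT).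
Proof.
apply: (iffP idP) => [full | inj].
  have : #|perm_symbols s| == #|'I_n| by rewrite (eqP full) cardsT.
  by move/imset_injP => inj i j; apply: inj.
by rewrite eqEcard subsetT card_imset // cardsT max_card.
Qed.

Lemma perm_cells_transversal (s : 'S_n) :
  perm_symbols s == setT -> Defs.transversal L (perm_cells s).
Proof.
move/perm_symbolsTP => distinct; apply/and4P; split.
- by rewrite card_perm_cells.
- apply/forallP => i; apply/cards1P; exists (i, s i); apply/setP => c.
  rewrite !inE; apply/andP/eqP => [[/imsetP [j _ ->] /= /eqP ->] // | ->].
  by rewrite imset_f.
- apply/forallP => j; apply/cards1P; exists ((s^-1)%g j, j); apply/setP => c.
  rewrite !inE; apply/andP/eqP => [[/imsetP [i _ ->] /= /eqP <-] | ->].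
    by rewrite permK.
  by split=> //; rewrite -{2}(permKV s j) imset_f.
- apply/forall_inP => _ /imsetP [i _ ->]; apply/forall_inP => _ /imsetP [j _ ->].
  by apply/implyP => /eqP /= /distinct ->.
Qed.

(* ... and conversely every transversal is the cell set of such a permutation: the
   row condition defines a column function, injective by the column
   condition, whose cells fill T by counting. *)
Lemma transversal_perm_cells T :
  Defs.transversal L T -> exists2 s, T = perm_cells s & perm_symbols s == setT.
Proof.
case/and4P => /eqP cardT /forallP rows /forallP cols /forall_inP distinct.
have /fin_all_exists [f fT] : forall i, exists j, (i, j) \in T.
  move=> i; have /cards1P [[i' j] row_i] := rows i.
  have : (i', j) \in [set c in T | c.1 == i] by rewrite row_i set11.
  by rewrite inE => /andP [cT /eqP /= <-]; exists j.
have f_inj : injective f.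
  move=> i i' eq_f.
  have /card_le1_eqP eq_in_col : #|[set c in T | c.2 == f i]| <= 1
    by rewrite (eqP (cols _)).
  have := eq_in_col (i, f i) (i', f i').
  by rewrite !inE !fT eq_f eqxx => /(_ isT isT) [].
pose s := perm f_inj.
have sT k : (k, s k) \in T by rewrite permE fT.
have sub : perm_cells s \subset T by apply/subsetP => _ /imsetP [i _ ->].
have defT : T = perm_cells s
  by apply/eqP; rewrite eq_sym eqEcard sub card_perm_cells cardT /=.
exists s => //; apply/perm_symbolsTP => i j eqL.
have /forall_inP/(_ (j, s j)) := distinct (i, s i) (sT i).
by rewrite sT eqL eqxx => /(_ isT) /eqP [].
Qed.

Lemma num_transversals_perm :
  num_transversals L = #|[set s : 'S_n | perm_symbols s == setT]|.
Proof.
rewrite /num_transversals -(card_imset _ perm_cells_inj).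
apply: eq_card => T; rewrite inE; apply/idP/imsetP.
  by case/transversal_perm_cells => s -> full; exists s; rewrite ?inE.
by case=> s; rewrite inE => full ->; apply: perm_cells_transversal.
Qed.

End PermutationTransversals.

Local Open Scope ring_scope.

Lemma natr_F2 k : (k%:R : 'F_2) = (odd k)%:R.
Proof. by rewrite -modn2 Fp_nat_mod. Qed.

Lemma pchar_F2 : (2 \in [pchar 'F_2])%N.
Proof. exact: pchar_Fp. Qed.

Lemma F2_idem (x : 'F_2) : x * x = x.
Proof. by case: x => [[|[|k]] //] lt_x; apply: val_inj. Qed.

Lemma sum_indicator (R : pzSemiRingType) (T : finType) (b : pred T) :
  \sum_(t : T) ((b t)%:R : R) = #|[set t | b t]|%:R.
Proof.
rewrite -natr_sum -sum1_card; congr (_ %:R); rewrite [RHS]big_mkcond.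
by apply: eq_bigr => t _; rewrite inE; case: (b t).
Qed.

(* The supersets of C in T correspond to the subsets of its complement. *)
Lemma card_supersets (T : finType) (C : {set T}) :
  #|[set A : {set T} | C \subset A]| = (2 ^ #|~: C|)%N.
Proof.
rewrite -card_powerset -(card_imset (powerset (~: C)) (@setC_inj T)).
apply: eq_card => A; rewrite inE; apply/idP/imsetP => [sub_CA | [D]].
  by exists (~: A); rewrite ?setCK // inE setCS.
by rewrite inE => sub_D ->; rewrite -setCS setCK.
Qed.

Definition ones (R : pzSemiRingType) n : 'M[R]_n := const_mx 1.

Lemma ones_sqr_even n : ~~ odd n -> ones 'F_2 n *m ones 'F_2 n = 0.
Proof.
move=> even_n; apply/matrixP => i k; rewrite !mxE.
under eq_bigr do rewrite !mxE mulr1.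
by rewrite sumr_const card_ord natr_F2 (negbTE even_n).
Qed.

Lemma ones_add_self n : ones 'F_2 n + ones 'F_2 n = 0.
Proof. by apply/matrixP => i j; rewrite !mxE (addrr_pchar2 pchar_F2). Qed.

(* A nonempty all-ones matrix is nonzero, so anything annihilating it on
   the left is singular. *)
Lemma det_eq0_mul_ones (R : fieldType) n (M : 'M[R]_n) :
  (0 < n)%N -> M *m ones R n = 0 -> \det M = 0.
Proof.
move=> n_gt0 MJ; apply/eqP/negPn/negP => detM_neq0.
have unitM : M \in unitmx by rewrite unitmxE unitfE.
have : ones R n = 0 by rewrite -(mulKmx unitM (ones R n)) MJ mulmx0.
move/matrixP/(_ (Ordinal n_gt0) (Ordinal n_gt0)); rewrite !mxE.
by apply/eqP; apply: oner_neq0.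
Qed.

(* If M fixes the all-ones matrix of even order, adding it to M does not
   change the determinant: M + J = M (1 + J) and 1 + J is an involution. *)
Lemma det_add_ones n (M : 'M['F_2]_n) :
  ~~ odd n -> M *m ones 'F_2 n = ones 'F_2 n -> \det (M + ones 'F_2 n) = \det M.
Proof.
move=> even_n MJ.
have -> : M + ones 'F_2 n = M *m (1%:M + ones 'F_2 n)
  by rewrite mulmxDr mulmx1 MJ.
have invol : (1%:M + ones 'F_2 n) *m (1%:M + ones 'F_2 n) = 1%:M.
  rewrite mulmxDr !mulmxDl ones_sqr_even // !mul1mx mulmx1 addr0.
  by rewrite -addrA ones_add_self addr0.
have det_invol : \det (1%:M + ones 'F_2 n) = 1.
  by rewrite -[LHS]F2_idem -det_mulmx invol det1.
by rewrite det_mulmx det_invol mulr1.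
Qed.

Section SymbolMatrix.
Variables (n : nat) (L : 'I_n -> 'I_n -> 'I_n).

Definition symbol_matrix (A : {set 'I_n}) : 'M['F_2]_n :=
  \matrix_(i, j) (L i j \in A)%:R.

(* Leibniz expansion: det M_A counts the permutations whose symbols lie
   in A (signs are trivial in characteristic 2). *)
Lemma det_symbol_matrix A :
  \det (symbol_matrix A) = \sum_(s : 'S_n) (perm_symbols L s \subset A)%:R.
Proof.
apply: eq_bigr => s _; rewrite (oppr_pchar2 pchar_F2) expr1n mul1r.
have [sub_A | /subsetPn [_ /imsetP [i _ ->] notA]] := boolP (_ \subset A).
  by apply: big1 => i _; rewrite mxE (subsetP sub_A) ?imset_f.
by rewrite (bigD1 i) //= mxE (negbTE notA) mul0r.
Qed.

(* Summing over all A, a permutation s is counted once for every superset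
   of its symbol set, i.e. 2 ^ #|~: symbols| times: an odd number exactly
   when its symbols are all distinct. *)
Lemma sum_det_symbol_matrix :
  \sum_(A : {set 'I_n}) \det (symbol_matrix A)
    = #|[set s : 'S_n | perm_symbols L s == setT]|%:R.
Proof.
under eq_bigr do rewrite det_symbol_matrix.
rewrite exchange_big /= -sum_indicator; apply: eq_bigr => s _.
rewrite sum_indicator card_supersets natr_F2 oddX orbF cards_eq0.
by rewrite -setCT (inj_eq (@setC_inj _)).
Qed.

Hypothesis row_inj : forall i, injective (L i).
Hypothesis n_gt0 : (0 < n)%N.
Hypothesis even_n : ~~ odd n.

(* Row i of M_A has |A| ones, since L i is a bijection of the symbols. *)
Lemma symbol_matrix_ones A :
  symbol_matrix A *m ones 'F_2 n = #|A|%:R *: ones 'F_2 n.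
Proof.
apply/matrixP => i k; rewrite !mxE.
under eq_bigr do rewrite !mxE mulr1.
rewrite sum_indicator mulr1 -(card_preimset A (@row_inj i)).
by congr (_ %:R); apply: eq_card => j; rewrite !inE.
Qed.

Lemma symbol_matrixC A : symbol_matrix (~: A) = symbol_matrix A + ones 'F_2 n.
Proof.
apply/matrixP => i j; rewrite !mxE inE.
by case: (L i j \in A); rewrite /= ?add0r ?(addrr_pchar2 pchar_F2).
Qed.

(* Complementary symbol sets give equal determinants: if |A| is odd, M_A
   fixes J; if |A| is even, M_A and M_A + J both annihilate J. *)
Lemma det_symbol_matrixC A :
  \det (symbol_matrix (~: A)) = \det (symbol_matrix A).
Proof.
rewrite symbol_matrixC; have := symbol_matrix_ones A.
rewrite natr_F2; case: (odd #|A|) => /= MJ.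
  by apply: det_add_ones; rewrite // MJ scale1r.
rewrite scale0r in MJ.
rewrite (det_eq0_mul_ones n_gt0 MJ) (det_eq0_mul_ones n_gt0) //.
by rewrite mulmxDl MJ ones_sqr_even // addr0.
Qed.

(* Pairing each symbol set with its complement, the sum vanishes. *)
Lemma sum_det_symbol_matrix_eq0 :
  \sum_(A : {set 'I_n}) \det (symbol_matrix A) = 0.
Proof.
pose x0 := Ordinal n_gt0.
rewrite (bigID (fun A : {set 'I_n} => x0 \in A)) /=.
rewrite [X in _ + X](reindex_inj (@setC_inj _)) /=.
under [X in _ + X]eq_bigl do rewrite inE negbK.
under [X in _ + X]eq_bigr do rewrite det_symbol_matrixC.
by rewrite addrr_pchar2 // pchar_F2.
Qed.

End SymbolMatrix.

Local Close Scope ring_scope.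

Theorem theorem1p3 (n : nat) (L : 'I_n -> 'I_n -> 'I_n) :
  0 < n -> latin_square L -> ~~ odd n -> ~~ odd (num_transversals L).
Proof.
move=> n_gt0 /latin_row_inj row_inj even_n.
have := sum_det_symbol_matrix_eq0 row_inj n_gt0 even_n.
rewrite sum_det_symbol_matrix -num_transversals_perm natr_F2.
by case: odd => //= /eqP; rewrite oner_eq0.
Qed.
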